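(* For every two-player stage game $G$: if $G\in\mathcal{G}_{LS}^{p,p}$ then $G\in\mathcal{G}_{LS}^{m,m}$; that is, $\mathcal{G}_{LS}^{p,p}\subseteq\mathcal{G}_{LS}^{m,m}$.
   Context: A two-player stage game $G$ has finite nonempty action sets $A_1,A_2$ and payoffs $u_1,u_2:A_1\times A_2\to\mathbb{R}$, extended to mixed strategies by expectation. $G(T)$ is the $T$-round repetition with realized actions observed each round and payoffs the expected sum of stage payoffs; an SPE of $G(T)$ is a strategy profile whose continuation after every history of length $k<T$ is a Nash equilibrium of $G(T-k)$. Regimes: pure-pure ($p,p$): both players restricted to actions (in the stage game and in every round, including deviations); mixed-pure ($m,p$): player 1 may mix, player 2 uses only actions; mixed-mixed ($m,m$): both may mix. For regime $r$, $\mathrm{Nash}^r(G)$ is the set of stage-game profiles available in $r$ from which no player can profitably deviate unilaterally to a strategy available in $r$. Locally suboptimal behavior occurs in an SPE $\mu$ of $G(T)$ (regime $r$) if for some history $h$ of length $k<T$, $(\mu_1(h),\mu_2(h))\notin\mathrm{Nash}^r(G)$. $\mathcal{G}_{LS}^r$ is the set of stage games $G$ for which there exist $T\ge1$ and an SPE of $G(T)$ in regime $r$ in which locally suboptimal behavior occurs. *)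

From mathcomp Require Import all_boot all_order all_algebra.
From mathcomp Require Import reals.
Set Implicit Arguments. Unset Strict Implicit. Unset Printing Implicit Defensive.
Import Order.TTheory GRing.Theory Num.Theory.
Local Open Scope ring_scope.

Inductive regime := PP | MP | MM.

Definition mixes1 (r : regime) : bool := if r is PP then false else true.
Definition mixes2 (r : regime) : bool := if r is MM then true else false.

(* A stage strategy of a player with action set A is a function A -> R giving
   the probability of each action. *)
Definition is_dist {R : realType} {A : finType} (p : A -> R) : Prop :=
  (forall a, 0 <= p a) /\ \sum_(a : A) p a = 1.

Definition dirac {R : realType} {A : finType} (a : A) : A -> R :=
  fun b => (b == a)%:R.

Definition avail {R : realType} {A : finType} (mix : bool) (p : A -> R) : Prop :=
  if mix then is_dist p else exists a : A, forall b, p b = dirac a b.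

Definition stage_pay {R : realType} {A1 A2 : finType} (u : A1 -> A2 -> R)
  (p1 : A1 -> R) (p2 : A2 -> R) : R :=
  \sum_(a1 : A1) \sum_(a2 : A2) p1 a1 * p2 a2 * u a1 a2.

Definition stage_Nash {R : realType} {A1 A2 : finType} (r : regime)
  (u1 u2 : A1 -> A2 -> R) (p1 : A1 -> R) (p2 : A2 -> R) : Prop :=
  avail (mixes1 r) p1 /\ avail (mixes2 r) p2 /\
  (forall q1 : A1 -> R, avail (mixes1 r) q1 ->
      stage_pay u1 q1 p2 <= stage_pay u1 p1 p2) /\
  (forall q2 : A2 -> R, avail (mixes2 r) q2 ->
      stage_pay u2 p1 q2 <= stage_pay u2 p1 p2).

Definition history (A1 A2 : finType) := seq (A1 * A2)%type.

Definition strat {R : realType} (A1 A2 A : finType) := history A1 A2 -> A -> R.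

Definition strat_avail {R : realType} {A1 A2 A : finType} (mix : bool)
  (s : @strat R A1 A2 A) : Prop :=
  forall h, avail mix (s h).

Fixpoint value {R : realType} {A1 A2 : finType} (u : A1 -> A2 -> R)
  (s1 : @strat R A1 A2 A1) (s2 : @strat R A1 A2 A2) (n : nat) (h : history A1 A2)
  : R :=
  if n is n'.+1 then
    \sum_(a1 : A1) \sum_(a2 : A2)
      s1 h a1 * s2 h a2 * (u a1 a2 + value u s1 s2 n' (rcons h (a1, a2)))
  else 0.

Definition rep_pay {R : realType} {A1 A2 : finType} (u : A1 -> A2 -> R)
  (s1 : @strat R A1 A2 A1) (s2 : @strat R A1 A2 A2) (n : nat) : R :=
  value u s1 s2 n [::].

Definition rep_Nash {R : realType} {A1 A2 : finType} (r : regime)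
  (u1 u2 : A1 -> A2 -> R) (n : nat)
  (s1 : @strat R A1 A2 A1) (s2 : @strat R A1 A2 A2) : Prop :=
  strat_avail (mixes1 r) s1 /\ strat_avail (mixes2 r) s2 /\
  (forall t1 : @strat R A1 A2 A1, strat_avail (mixes1 r) t1 ->
      rep_pay u1 t1 s2 n <= rep_pay u1 s1 s2 n) /\
  (forall t2 : @strat R A1 A2 A2, strat_avail (mixes2 r) t2 ->
      rep_pay u2 s1 t2 n <= rep_pay u2 s1 s2 n).

Definition cont {R : realType} {A1 A2 A : finType} (s : @strat R A1 A2 A)
  (h : history A1 A2) : @strat R A1 A2 A :=
  fun h' => s (h ++ h').

Definition SPE {R : realType} {A1 A2 : finType} (r : regime)
  (u1 u2 : A1 -> A2 -> R) (T : nat)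
  (s1 : @strat R A1 A2 A1) (s2 : @strat R A1 A2 A2) : Prop :=
  strat_avail (mixes1 r) s1 /\ strat_avail (mixes2 r) s2 /\
  forall h : history A1 A2, (size h < T)%N ->
    rep_Nash r u1 u2 (T - size h) (cont s1 h) (cont s2 h).

Definition locally_suboptimal {R : realType} {A1 A2 : finType} (r : regime)
  (u1 u2 : A1 -> A2 -> R) (T : nat)
  (s1 : @strat R A1 A2 A1) (s2 : @strat R A1 A2 A2) : Prop :=
  exists h : history A1 A2, (size h < T)%N /\ ~ stage_Nash r u1 u2 (s1 h) (s2 h).

Definition in_G_LS {R : realType} {A1 A2 : finType} (r : regime)
  (u1 u2 : A1 -> A2 -> R) : Prop :=
  exists T : nat, (1 <= T)%N /\
    exists (s1 : @strat R A1 A2 A1) (s2 : @strat R A1 A2 A2),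
      SPE r u1 u2 T s1 s2 /\ locally_suboptimal r u1 u2 T s1 s2.

From mathcomp Require Import all_boot all_order all_algebra.
From mathcomp Require Import reals.
From Stdlib Require Import ClassicalEpsilon FunctionalExtensionality.
Set Implicit Arguments. Unset Strict Implicit. Unset Printing Implicit Defensive.
Import Order.TTheory GRing.Theory Num.Theory.
Local Open Scope ring_scope.

(* G_LS^{p,p} is included in G_LS^{m,m}: a pure SPE of G(T) with locally
   suboptimal behaviour is, unchanged, a mixed SPE with the same defect.
   1. Pure strategies are degenerate mixed strategies, so a pure profile that
      is a stage Nash equilibrium against mixed deviations is one against pure
      deviations; contrapositively, local suboptimality survives.
   2. The heart of the proof: against any opponent behaviour in G(n), every
      mixed deviation is weakly beaten by some pure one.  By induction on n:
      choose a best pure continuation after each first-round profile, then a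
      first-round action maximising the resulting payoff; a mixed first round
      only averages these payoffs.  The argument is written for player 1; the
      statement for player 2 follows by exchanging the roles of the players.
   3. Hence a pure Nash equilibrium of G(n) against pure deviations is one
      against mixed deviations, and every continuation of a pure SPE remains
      Nash in the mixed regime. *)

Section PureStrategies.
Variable R : realType.

Lemma sum_dirac (A : finType) (a : A) (f : A -> R) :
  \sum_(b : A) dirac a b * f b = f a.
Proof.
rewrite (bigD1 a) //= big1 => [|b /negbTE nba].
  by rewrite /dirac eqxx mul1r addr0.
by rewrite /dirac nba mul0r.
Qed.

Lemma dirac_dist (A : finType) (a : A) : is_dist (dirac a : A -> R).
Proof.
split; first by move=> b; rewrite /dirac ler0n.
by have := sum_dirac a (fun _ => 1); under eq_bigr do rewrite mulr1.
Qed.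

Lemma pure_avail_mixed (A : finType) (p : A -> R) : avail false p -> avail true p.
Proof.
move=> [a pa]; have [dirac_ge0 dirac_sum1] := dirac_dist a; split.
  by move=> b; rewrite pa.
by rewrite -dirac_sum1; apply: eq_bigr => b _; rewrite pa.
Qed.

Lemma pure_strat_avail_mixed (A1 A2 A : finType) (s : @strat R A1 A2 A) :
  strat_avail false s -> strat_avail true s.
Proof. by move=> s_pure h; apply: pure_avail_mixed. Qed.

Lemma pure_strat_ge0 (A1 A2 A : finType) (s : @strat R A1 A2 A) :
  strat_avail false s -> forall h a, 0 <= s h a.
Proof. by move=> /pure_strat_avail_mixed s_mixed h; case: (s_mixed h). Qed.

Lemma stage_Nash_mixed_pure (A1 A2 : finType) (u1 u2 : A1 -> A2 -> R)
    (p1 : A1 -> R) (p2 : A2 -> R) :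
  avail false p1 -> avail false p2 ->
  stage_Nash MM u1 u2 p1 p2 -> stage_Nash PP u1 u2 p1 p2.
Proof.
move=> p1_pure p2_pure [_ [_ [best1 best2]]]; split=> //; split=> //; split.
  by move=> q1 /pure_avail_mixed; apply: best1.
by move=> q2 /pure_avail_mixed; apply: best2.
Qed.

Lemma dist_average_le (A : finType) (d W : A -> R) (M : R) :
  is_dist d -> (forall b, W b <= M) -> \sum_b d b * W b <= M.
Proof.
move=> [d_ge0 d_sum1] W_le; apply: le_trans (_ : \sum_b d b * M <= _).
  by apply: ler_sum => b _; apply: ler_wpM2l.
by rewrite -big_distrl /= d_sum1 mul1r.
Qed.

End PureStrategies.

Definition flip_history (A1 A2 : finType) (h : history A1 A2) : history A2 A1 :=
  [seq (x.2, x.1) | x <- h].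

Definition flip_strat (R : realType) (A1 A2 A : finType) (s : @strat R A1 A2 A)
  : @strat R A2 A1 A := fun h => s (flip_history h).

Lemma flip_historyK (A1 A2 : finType) :
  cancel (@flip_history A1 A2) (@flip_history A2 A1).
Proof. by elim=> [|[a1 a2] h IH] //=; rewrite IH. Qed.

Lemma flip_stratK (R : realType) (A1 A2 A : finType) (s : @strat R A1 A2 A) :
  flip_strat (flip_strat s) = s.
Proof. by apply: functional_extensionality => h; rewrite /flip_strat flip_historyK. Qed.

Section RepeatedGame.
Variables (R : realType) (A1 A2 : finType).
Local Notation payoff := (A1 -> A2 -> R).
Local Notation strat1 := (@strat R A1 A2 A1).
Local Notation strat2 := (@strat R A1 A2 A2).

Lemma value_cat (u : payoff) (s1 : strat1) (s2 : strat2) n h h' :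
  value u s1 s2 n (h ++ h') = value u (cont s1 h) (cont s2 h) n h'.
Proof.
elim: n h' => [//|n IH] h' /=.
by apply: eq_bigr => a1 _; apply: eq_bigr => a2 _; rewrite rcons_cat IH.
Qed.

Lemma value_first_round (u : payoff) (s1 : strat1) (s2 : strat2) n :
  value u s1 s2 n.+1 [::] =
  \sum_a1 \sum_a2 s1 [::] a1 * s2 [::] a2 *
    (u a1 a2 + value u (cont s1 [:: (a1, a2)]) (cont s2 [:: (a1, a2)]) n [::]).
Proof.
by apply: eq_bigr => a1 _; apply: eq_bigr => a2 _; rewrite -value_cat cats0.
Qed.

Lemma value_flip (u : payoff) (s1 : strat1) (s2 : strat2) n h :
  value u s1 s2 n h =
  value (fun a2 a1 => u a1 a2) (flip_strat s2) (flip_strat s1) n (flip_history h).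
Proof.
elim: n h => [//|n IH] h /=; rewrite [RHS]exchange_big /=.
apply: eq_bigr => a1 _; apply: eq_bigr => a2 _.
rewrite /flip_strat flip_historyK IH /flip_history map_rcons -/(flip_history h).
by rewrite [s2 h a2 * _]mulrC.
Qed.

Lemma pure_deviation1 (a0 : A1) (u : payoff) n (s2 : strat2) (t1 : strat1) :
  (forall h a, 0 <= s2 h a) -> strat_avail true t1 ->
  exists p1, strat_avail false p1 /\ value u t1 s2 n [::] <= value u p1 s2 n [::].
Proof.
elim: n s2 t1 => [|n IH] s2 t1 s2_ge0 t1_mixed.
  by exists (fun _ => dirac a0); split => // h; exists a0.
pose better_cont x p1 := strat_avail false p1 /\
  value u (cont t1 [:: x]) (cont s2 [:: x]) n [::] <=
  value u p1 (cont s2 [:: x]) n [::].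
have best_cont x : exists p1, better_cont x p1.
  by apply: IH => [h a|h]; [apply: s2_ge0 | apply: t1_mixed].
pose next x := proj1_sig (constructive_indefinite_description _ (best_cont x)).
have nextP x : better_cont x (next x) :=
  proj2_sig (constructive_indefinite_description _ _).
(* payoff of playing a1 first and the best pure continuation afterwards *)
pose W a1 := \sum_a2 s2 [::] a2 *
  (u a1 a2 + value u (next (a1, a2)) (cont s2 [:: (a1, a2)]) n [::]).
have [am _ am_max] := @arg_maxP _ _ _ a0 xpredT W isT.
pose p1 (h : history A1 A2) := if h is x :: h' then next x h' else dirac am.
exists p1; split; first by case=> [|x h] /=; [exists am | apply: (nextP x).1].
have split_first (d : A1 -> R) s1 : \sum_a1 \sum_a2 d a1 * s2 [::] a2 *
    (u a1 a2 + value u (cont s1 [:: (a1, a2)]) (cont s2 [:: (a1, a2)]) n [::]) =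
    \sum_a1 d a1 * \sum_a2 s2 [::] a2 *
    (u a1 a2 + value u (cont s1 [:: (a1, a2)]) (cont s2 [:: (a1, a2)]) n [::]).
  by apply: eq_bigr => a1 _; rewrite big_distrr; apply: eq_bigr => a2 _; rewrite -mulrA.
have -> : value u p1 s2 n.+1 [::] = W am.
  by rewrite value_first_round split_first sum_dirac.
rewrite value_first_round split_first.
apply: le_trans _ (dist_average_le (t1_mixed [::]) (fun a1 => am_max a1 isT)).
apply: ler_sum => a1 _; apply: ler_wpM2l; first by case: (t1_mixed [::]).
apply: ler_sum => a2 _; apply: ler_wpM2l => //.
by rewrite lerD2l; apply: (nextP _).2.
Qed.

End RepeatedGame.

Section Equilibria.
Variables (R : realType) (A1 A2 : finType).
Local Notation payoff := (A1 -> A2 -> R).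
Local Notation strat1 := (@strat R A1 A2 A1).
Local Notation strat2 := (@strat R A1 A2 A2).

Lemma pure_deviation2 (a0 : A2) (u : payoff) n (s1 : strat1) (t2 : strat2) :
  (forall h a, 0 <= s1 h a) -> strat_avail true t2 ->
  exists p2, strat_avail false p2 /\ value u s1 t2 n [::] <= value u s1 p2 n [::].
Proof.
move=> s1_ge0 t2_mixed.
have [q [q_pure q_best]] := pure_deviation1 a0 (fun a2 a1 => u a1 a2) n
  (s2 := flip_strat s1) (t1 := flip_strat t2) (fun h => s1_ge0 _)
  (fun h => t2_mixed _).
exists (flip_strat q); split; first by move=> h; apply: q_pure.
by rewrite !(value_flip u) flip_stratK.
Qed.

Lemma rep_Nash_pure_mixed (a1 : A1) (a2 : A2) (u1 u2 : payoff) n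
    (s1 : strat1) (s2 : strat2) :
  strat_avail false s1 -> strat_avail false s2 ->
  rep_Nash PP u1 u2 n s1 s2 -> rep_Nash MM u1 u2 n s1 s2.
Proof.
move=> s1_pure s2_pure [_ [_ [best1 best2]]].
split; first exact: pure_strat_avail_mixed.
split; first exact: pure_strat_avail_mixed.
split=> [t1 t1_mixed | t2 t2_mixed].
  have [p1 [p1_pure p1_better]] :=
    pure_deviation1 a1 u1 n (pure_strat_ge0 s2_pure) t1_mixed.
  exact: le_trans p1_better (best1 p1 p1_pure).
have [p2 [p2_pure p2_better]] :=
  pure_deviation2 a2 u2 n (pure_strat_ge0 s1_pure) t2_mixed.
exact: le_trans p2_better (best2 p2 p2_pure).
Qed.

Lemma SPE_pure_mixed (a1 : A1) (a2 : A2) (u1 u2 : payoff) T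
    (s1 : strat1) (s2 : strat2) :
  SPE PP u1 u2 T s1 s2 -> SPE MM u1 u2 T s1 s2.
Proof.
move=> [s1_pure [s2_pure Nash_cont]].
split; first exact: pure_strat_avail_mixed.
split; first exact: pure_strat_avail_mixed.
move=> h h_lt; have := rep_Nash_pure_mixed a1 a2 _ _ (Nash_cont h h_lt); apply.
  by move=> h'; apply: s1_pure.
by move=> h'; apply: s2_pure.
Qed.

End Equilibria.

Theorem mainTheorem16 (R : realType) (A1 A2 : finType)
  (hA1 : (0 < #|A1|)%N) (hA2 : (0 < #|A2|)%N) (u1 u2 : A1 -> A2 -> R) :
  in_G_LS PP u1 u2 -> in_G_LS MM u1 u2.
Proof.
have [a1 _] := card_gt0P hA1; have [a2 _] := card_gt0P hA2.
move=> [T [T_ge1 [s1 [s2 [spe [h [h_lt not_Nash]]]]]]].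
have [s1_pure [s2_pure _]] := spe.
exists T; split => //; exists s1, s2; split; first exact: SPE_pure_mixed spe.
exists h; split => //; move=> /(stage_Nash_mixed_pure (s1_pure h) (s2_pure h)).
exact: not_Nash.
Qed.
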